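(* For all integers $k,l\ge1$, $sat^*([k]\times[l],\{\vee_2,\wedge_2\})=\max\{k,l\}$.
   Context: $[k]\times[l]$ is ordered coordinatewise. $\vee_2$ is the poset on three elements $a,b_1,b_2$ whose only relations are $a<b_1,a<b_2$; $\wedge_2$ is the poset on three elements $a,b_1,b_2$ whose only relations are $b_1<a,b_2<a$. For posets $P,R$, $P$ is a strong subposet of $R$ if there is an injection $i:P\to R$ with $p\le_P p'\iff i(p)\le_R i(p')$. A subset $F\subseteq Q$ is strong $\{\vee_2,\wedge_2\}$-saturated if neither $\vee_2$ nor $\wedge_2$ is a strong subposet of $F$, but for every $x\in Q\setminus F$, at least one of $\vee_2,\wedge_2$ is a strong subposet of $F\cup\{x\}$. $sat^*(Q,\{\vee_2,\wedge_2\})$ is the minimum size of such a subset. *)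

From mathcomp Require Import all_boot.
Set Implicit Arguments. Unset Strict Implicit. Unset Printing Implicit Defensive.

(* The grid [k] x [l], with [k] = {1,...,k} represented by 'I_k = {0,...,k-1}
   (order-isomorphic), ordered coordinatewise. *)
Definition grid (k l : nat) : finType := ('I_k * 'I_l)%type.

Definition grid_le (k l : nat) : rel (grid k l) :=
  fun x y => (x.1 <= y.1)%N && (x.2 <= y.2)%N.

(* The three-element posets; elements of 'I_3: 0 = a, 1 = b1, 2 = b2. *)
Definition vee2_le : rel 'I_3 := fun x y => (x == y) || (val x == 0).
Definition wedge2_le : rel 'I_3 := fun x y => (x == y) || (val y == 0).

Definition strong_subposet (P T : finType) (leP : rel P) (leT : rel T)
    (F : {set T}) : Prop :=
  exists i : P -> T,
    [/\ injective i, (forall p, i p \in F) &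
        (forall p p', leP p p' = leT (i p) (i p'))].

Definition has_V_or_W (k l : nat) (F : {set grid k l}) : Prop :=
  strong_subposet vee2_le (@grid_le k l) F \/
  strong_subposet wedge2_le (@grid_le k l) F.

Definition strong_VW_saturated (k l : nat) (F : {set grid k l}) : Prop :=
  [/\ ~ strong_subposet vee2_le (@grid_le k l) F,
      ~ strong_subposet wedge2_le (@grid_le k l) F &
      forall x : grid k l, x \notin F -> has_V_or_W (x |: F)].

Definition sat_star_is (k l m : nat) : Prop :=
  (exists F : {set grid k l}, strong_VW_saturated F /\ #|F| = m) /\
  (forall F : {set grid k l}, strong_VW_saturated F -> (m <= #|F|)%N).

From mathcomp Require Import all_boot zify.
Set Implicit Arguments. Unset Strict Implicit. Unset Printing Implicit Defensive.

(* In a poset, a set contains a strong V_2 or W_2 exactly when comparability is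
   not transitive on it, so the saturated families are the maximal sets on which
   comparability is transitive.  Such a set F meets every column of the grid: if
   column i were empty and F had points to its left, let g be the lowest of them
   and M the highest one comparable to g; the point of column i in the row of M
   is comparable to exactly the points of F that M is comparable to, so it could
   be added to F.  Reflecting the grid handles points to the right, transposing
   it handles rows, hence #|F| >= max(k, l).  Conversely, for l <= k the
   staircase formed by the top row followed by the antidiagonal ending in the
   bottom-right corner has k points and is maximal: a point off it is
   comparable to the staircase points of its own row and of its own column,
   which are incomparable to each other. *)

Section Comparability.
Variables (T : finType) (le : rel T).

Definition comparable_by : rel T := fun x y => le x y || le y x.

Lemma comparable_by_sym : symmetric comparable_by.
Proof. by move=> x y; rewrite /comparable_by orbC. Qed.

Definition comparability_transitive (S : {set T}) : Prop :=
  {in S & S & S, forall a b c,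
    comparable_by a b -> comparable_by b c -> comparable_by a c}.

Definition comparability_broken (S : {set T}) : Prop :=
  exists a b c, [/\ [/\ a \in S, b \in S & c \in S],
    comparable_by a b, comparable_by b c & ~~ comparable_by a c].

Definition comparability_maximal (S : {set T}) : Prop :=
  comparability_transitive S /\
  forall x, x \notin S -> comparability_broken (x |: S).

Lemma comparability_transitive_unbroken (S : {set T}) :
  comparability_transitive S -> ~ comparability_broken S.
Proof.
by move=> trS [a [b [c [[Sa Sb Sc] ab bc]]]]; rewrite (trS a b c).
Qed.

Lemma strong_vee_wedge_broken (S : {set T}) :
  strong_subposet vee2_le le S \/ strong_subposet wedge2_le le S ->
  comparability_broken S.
Proof.
case=> -[i [_ iS iE]];
  exists (i (@Ordinal 3 1 isT)), (i (@Ordinal 3 0 isT)), (i (@Ordinal 3 2 isT));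
  by rewrite /comparable_by -!iE !iS.
Qed.

Hypotheses (le_refl : reflexive le) (le_trans : transitive le).

Lemma comparable_by_refl : reflexive comparable_by.
Proof. by move=> x; rewrite /comparable_by le_refl. Qed.

Lemma strong_subposet_of_embedding (P : finType) (leP : rel P) (S : {set T})
    (i : P -> T) :
  antisymmetric leP -> (forall p, i p \in S) ->
  (forall p q, leP p q = le (i p) (i q)) -> strong_subposet leP le S.
Proof.
move=> leP_anti iS iE; exists i; split=> // p q ipq.
by apply: leP_anti; rewrite !iE ipq le_refl.
Qed.

Definition triple (a b c : T) (p : 'I_3) : T := nth a [:: a; b; c] p.

Lemma triple_in (S : {set T}) a b c p :
  a \in S -> b \in S -> c \in S -> triple a b c p \in S.
Proof. by case: p => [[|[|[|]]] //]. Qed.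

Lemma vee2_le_anti : antisymmetric vee2_le.
Proof.
move=> p q /andP[/orP[/eqP //|/eqP p0] /orP[/eqP //|/eqP q0]].
by apply: val_inj; rewrite p0 q0.
Qed.

Lemma wedge2_le_anti : antisymmetric wedge2_le.
Proof.
move=> p q /andP[/orP[/eqP //|/eqP q0] /orP[/eqP //|/eqP p0]].
by apply: val_inj; rewrite p0 q0.
Qed.

Lemma broken_strong_vee_wedge (S : {set T}) :
  comparability_broken S ->
  strong_subposet vee2_le le S \/ strong_subposet wedge2_le le S.
Proof.
case=> a [b [c [[Sa Sb Sc] ab bc]]].
rewrite /comparable_by negb_or => /andP[/negPf ac /negPf ca].
have iS p : triple b a c p \in S by apply: triple_in.
move: ab bc; rewrite /comparable_by => /orP[ab|ba] /orP[bc|cb].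
- by rewrite (le_trans ab bc) in ac.
- right; apply: (strong_subposet_of_embedding wedge2_le_anti iS).
  have /negPf nba : ~~ le b a by apply: contraFN ca => /(le_trans cb).
  have /negPf nbc : ~~ le b c by apply: contraFN ac => /(le_trans ab).
  move=> p q; case: p => -[|[|[|//]]] ?; case: q => -[|[|[|//]]] ?;
    by rewrite /wedge2_le /triple /= ?le_refl ?ab ?cb ?ac ?ca ?nba ?nbc.
- left; apply: (strong_subposet_of_embedding vee2_le_anti iS).
  have /negPf nab : ~~ le a b by apply: contraFN ac => ab; apply: le_trans ab bc.
  have /negPf ncb : ~~ le c b by apply: contraFN ca => cb; apply: le_trans cb ba.
  move=> p q; case: p => -[|[|[|//]]] ?; case: q => -[|[|[|//]]] ?;
    by rewrite /vee2_le /triple /= ?le_refl ?ba ?bc ?ac ?ca ?nab ?ncb.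
- by rewrite (le_trans cb ba) in ca.
Qed.

Lemma vee_wedge_free_transitive (S : {set T}) :
  ~ strong_subposet vee2_le le S -> ~ strong_subposet wedge2_le le S ->
  comparability_transitive S.
Proof.
move=> noV noW a b c Sa Sb Sc ab bc; apply/negPn/negP => ac.
by case: (@broken_strong_vee_wedge S); first by exists a, b, c.
Qed.

Lemma comparability_transitive_setU1 (S : {set T}) x y :
  comparability_transitive S -> y \in S ->
  {in S, forall z, comparable_by z x = comparable_by z y} ->
  comparability_transitive (x |: S).
Proof.
move=> trS Sy twin; pose collapse z := if z == x then y else z.
have collapseS z : z \in x |: S -> collapse z \in S.
  by move=> /setU1P[->|Sz]; rewrite /collapse ?eqxx //; case: ifP.
have twin' : {in x |: S, forall z, comparable_by z x = comparable_by z y}.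
  move=> z /setU1P[->|/twin //].
  by rewrite [comparable_by x y]comparable_by_sym (twin y Sy) !comparable_by_refl.
have collapse_r z w :
    z \in x |: S -> comparable_by z w = comparable_by z (collapse w).
  by move=> Sz; rewrite /collapse; case: ifP => [/eqP->|//]; apply: twin'.
have collapseE : {in x |: S &, forall z w,
    comparable_by z w = comparable_by (collapse z) (collapse w)}.
  move=> z w Sz Sw; rewrite (collapse_r z w Sz) comparable_by_sym.
  by rewrite (collapse_r _ z (setU1r _ (collapseS w Sw))) comparable_by_sym.
move=> a b c Sa Sb Sc.
rewrite (collapseE a b) ?(collapseE b c) ?(collapseE a c) //.
by apply: trS; apply: collapseS.
Qed.

End Comparability.

Section Transport.
Variables (T T' : finType) (le : rel T) (le' : rel T') (f : T -> T').
Hypothesis f_cmp : forall x y, comparable_by le' (f x) (f y) = comparable_by le x y.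

Lemma comparability_transitive_imset (S : {set T}) :
  comparability_transitive le S -> comparability_transitive le' (f @: S).
Proof.
move=> trS _ _ _ /imsetP[a Sa ->] /imsetP[b Sb ->] /imsetP[c Sc ->].
by rewrite !f_cmp; apply: trS.
Qed.

Lemma comparability_broken_imset (S : {set T}) :
  comparability_broken le S -> comparability_broken le' (f @: S).
Proof.
case=> a [b [c [[Sa Sb Sc] ab bc ac]]].
by exists (f a), (f b), (f c); rewrite !f_cmp !imset_f.
Qed.

Variables (g : T' -> T) (gK : cancel g f).

Lemma comparability_maximal_imset (S : {set T}) :
  comparability_maximal le S -> comparability_maximal le' (f @: S).
Proof.
case=> trS maxS; split; first exact: comparability_transitive_imset.
move=> x xS; have gxS : g x \notin S.
  by apply: contra xS => /(imset_f f); rewrite gK.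
by rewrite -(gK x) -imsetU1; apply/comparability_broken_imset/maxS.
Qed.

End Transport.

Lemma grid_le_refl k l : reflexive (@grid_le k l).
Proof. by move=> x; rewrite /grid_le !leqnn. Qed.

Lemma grid_le_trans k l : transitive (@grid_le k l).
Proof. by move=> y x z; rewrite /grid_le; lia. Qed.

Lemma strong_VW_saturatedE k l (F : {set grid k l}) :
  strong_VW_saturated F <-> comparability_maximal (@grid_le k l) F.
Proof.
have [le_refl le_trans] := (@grid_le_refl k l, @grid_le_trans k l).
split=> [[noV noW satF]|[trF maxF]].
  split; first exact: vee_wedge_free_transitive.
  by move=> x /satF /strong_vee_wedge_broken.
have unbroken := comparability_transitive_unbroken trF.
split; [move=> V | move=> W | by move=> x /maxF /broken_strong_vee_wedge; apply].
  by apply/unbroken/strong_vee_wedge_broken; left.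
by apply/unbroken/strong_vee_wedge_broken; right.
Qed.

Definition grid_transpose k l (x : grid k l) : grid l k := (x.2, x.1).

Lemma grid_transposeK k l : cancel (@grid_transpose k l) (@grid_transpose l k).
Proof. by case. Qed.

Lemma comparable_grid_transpose k l (x y : grid k l) :
  comparable_by (@grid_le _ _) (grid_transpose x) (grid_transpose y) =
  comparable_by (@grid_le _ _) x y.
Proof. by rewrite /comparable_by /grid_le /= andbC [(y.2 <= _) && _]andbC. Qed.

Definition grid_rev k l (x : grid k l) : grid k l := (rev_ord x.1, rev_ord x.2).

Lemma grid_revK k l : involutive (@grid_rev k l).
Proof. by case=> a b; rewrite /grid_rev /= !rev_ordK. Qed.

Lemma grid_le_rev k l (x y : grid k l) :
  grid_le (grid_rev x) (grid_rev y) = grid_le y x.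
Proof.
case: x y => [a b] [c d]; rewrite /grid_rev /grid_le /=.
by have := ltn_ord a; have := ltn_ord b; have := ltn_ord c; have := ltn_ord d; lia.
Qed.

Lemma comparable_grid_rev k l (x y : grid k l) :
  comparable_by (@grid_le _ _) (grid_rev x) (grid_rev y) =
  comparable_by (@grid_le _ _) x y.
Proof. by rewrite /comparable_by !grid_le_rev orbC. Qed.

Lemma maximal_right_of_empty_column k l (F : {set grid k l}) (i : 'I_k) :
  comparability_maximal (@grid_le k l) F -> {in F, forall f : grid k l, f.1 != i} ->
  {in F, forall f : grid k l, i < f.1}.
Proof.
move=> [trF maxF] offi f0 Ff0.
case: ltngtP => [//|f0_left|/val_inj i_f0]; last first.
  by move: (offi f0 Ff0); rewrite i_f0 eqxx.
have cmp_refl := comparable_by_refl (@grid_le_refl k l).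
pose left := [pred f : grid k l | (f \in F) && (f.1 < i)].
have [[g1 g2] /andP[Fg g_left] g_low] :=
  @arg_minnP _ f0 left (fun f => f.2) (introT andP (conj Ff0 f0_left)).
have [[m1 m2] /and3P[FM M_left gM] M_high] := @arg_maxnP _ (g1, g2)
  [pred f | [&& f \in F, f.1 < i & comparable_by (@grid_le k l) (g1, g2) f]]
  (fun f => f.2) (introT and3P (And3 Fg g_left (cmp_refl _))).
have M_twin : {in F, forall f : grid k l, comparable_by (@grid_le k l) f (i, m2) =
                                           comparable_by (@grid_le k l) f (m1, m2)}.
  move=> [a b] Ff; have f_off : a != i :> nat := offi _ Ff.
  have [f_left|f_right] := ltnP a i; last first.
    by move: M_left; rewrite /comparable_by /grid_le /= => M_left; apply/idP/idP; lia.
  apply/idP/idP => [f_below|fM].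
    apply/negPn/negP => fM.
    have fg : ~~ comparable_by (@grid_le k l) (a, b) (g1, g2).
      by apply: contra fM => fg; apply: (trF _ (g1, g2)).
    have := g_low (a, b); rewrite /= Ff f_left => /(_ isT).
    by move: f_below fM fg gM; rewrite /comparable_by /grid_le /=; lia.
  have fg : comparable_by (@grid_le k l) (g1, g2) (a, b).
    by rewrite comparable_by_sym; apply: (trF _ (m1, m2)); rewrite // comparable_by_sym.
  have := M_high (a, b); rewrite /= Ff f_left fg => /(_ isT).
  by move: fM; rewrite /comparable_by /grid_le /=; lia.
have xF : (i, m2) \notin F by apply/negP => /offi; rewrite eqxx.
have := comparability_transitive_setU1 (@grid_le_refl k l) trF FM M_twin.
by move/comparability_transitive_unbroken; case; apply: maxF.
Qed.

Lemma maximal_meets_column k l (F : {set grid k l}) (i : 'I_k) : 0 < l ->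
  comparability_maximal (@grid_le k l) F -> exists2 f, f \in F & f.1 = i.
Proof.
move=> l_gt0 maxF.
have [/exists_inP[f Ff /eqP]|] := boolP [exists f in F, f.1 == i]; first by exists f.
rewrite negb_exists_in => /forall_inP offi; exfalso.
have right_of_i := maximal_right_of_empty_column maxF offi.
have left_of_i : {in F, forall f : grid k l, f.1 < i}.
  move=> f Ff; have maxF' := comparability_maximal_imset
    (@comparable_grid_rev k l) (@grid_revK k l) maxF.
  have offi' : {in @grid_rev k l @: F, forall f : grid k l, f.1 != rev_ord i}.
    by move=> _ /imsetP[g Fg ->]; rewrite (inj_eq rev_ord_inj); apply: offi.
  have := maximal_right_of_empty_column maxF' offi' (imset_f (@grid_rev k l) Ff).
  by rewrite /=; have := ltn_ord i; have := ltn_ord f.1; lia.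
have F0 : F = set0.
  apply/setP => f; rewrite inE; apply/negP => Ff.
  by have := left_of_i f Ff; have := right_of_i f Ff; lia.
have xF : (i, Ordinal l_gt0) \notin F by rewrite F0 inE.
have [a [b [c [[Sa _ Sc] _ _]]]] := maxF.2 _ xF.
move: Sa Sc; rewrite F0 setU0 !inE => /eqP-> /eqP->.
by rewrite comparable_by_refl //; apply: grid_le_refl.
Qed.

Lemma maximal_card_ge_columns k l (F : {set grid k l}) : 0 < l ->
  comparability_maximal (@grid_le k l) F -> k <= #|F|.
Proof.
move=> l_gt0 maxF; apply: leq_trans (leq_imset_card fst F).
rewrite -{1}(card_ord k); apply/subset_leq_card/subsetP => i _.
by have [f Ff <-] := maximal_meets_column i l_gt0 maxF; apply: imset_f.
Qed.

Lemma maximal_card_ge k l (F : {set grid k l}) : 0 < k -> 0 < l ->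
  comparability_maximal (@grid_le k l) F -> maxn k l <= #|F|.
Proof.
move=> k_gt0 l_gt0 maxF; rewrite geq_max maximal_card_ge_columns //=.
have maxF' := comparability_maximal_imset
  (@comparable_grid_transpose k l) (@grid_transposeK l k) maxF.
by rewrite -(card_imset _ (can_inj (@grid_transposeK k l))) maximal_card_ge_columns.
Qed.

Section Staircase.
Variables k l : nat.
Hypothesis l_le_k : l <= k.

Definition staircase_point (a : 'I_k.+1) : grid k.+1 l.+1 :=
  (a, inord (minn l (k - a))).

Definition staircase : {set grid k.+1 l.+1} := [set staircase_point a | a : 'I_k.+1].

Lemma staircase_point2 a : (staircase_point a).2 = minn l (k - a) :> nat.
Proof. by rewrite inordK // ltnS geq_minl. Qed.

Lemma card_staircase : #|staircase| = k.+1.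
Proof. by rewrite card_imset ?card_ord // => a b []. Qed.

Lemma mem_staircase (x : grid k.+1 l.+1) :
  (x \in staircase) = (x.2 == minn l (k - x.1) :> nat).
Proof.
apply/imsetP/eqP => [[a _ ->]|]; first exact: staircase_point2.
case: x => a b /= b_eq; exists a => //; congr pair; apply: val_inj.
by rewrite /= b_eq inordK // ltnS geq_minl.
Qed.

Lemma comparable_staircase (a b : 'I_k.+1) :
  comparable_by (@grid_le _ _) (staircase_point a) (staircase_point b) =
  (a == b) || (l <= k - a) && (l <= k - b).
Proof.
rewrite /comparable_by /grid_le !staircase_point2 -val_eqE /=.
by have := ltn_ord a; have := ltn_ord b; lia.
Qed.

Lemma staircase_transitive : comparability_transitive (@grid_le _ _) staircase.
Proof.
move=> _ _ _ /imsetP[a _ ->] /imsetP[b _ ->] /imsetP[c _ ->].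
by rewrite !comparable_staircase -!val_eqE /=; lia.
Qed.

Lemma staircase_maximal : comparability_maximal (@grid_le _ _) staircase.
Proof.
split; first exact: staircase_transitive.
case=> a b; rewrite mem_staircase /= => off_staircase.
have b_le_l : b <= l by rewrite -ltnS.
have kb_lt : k - b < k.+1 by rewrite ltnS leq_subr.
exists (staircase_point a), (a, b), (staircase_point (inord (k - b))).
split; first by split; rewrite ?setU11 // setU1r // imset_f.
all: rewrite /comparable_by /grid_le !staircase_point2 /= ?inordK //; lia.
Qed.

End Staircase.

Lemma exists_maximal_grid k l : 0 < k -> 0 < l ->
  exists F : {set grid k l},
    comparability_maximal (@grid_le k l) F /\ #|F| = maxn k l.
Proof.
case: k => // k _; case: l => // l _.
have [l_le_k|k_lt_l] := leqP l k.
  exists (staircase k l); split; first exact: staircase_maximal.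
  by rewrite card_staircase; apply/esym/maxn_idPl.
exists (@grid_transpose l.+1 k.+1 @: staircase l k); split.
  apply: (comparability_maximal_imset (@comparable_grid_transpose _ _)
            (@grid_transposeK k.+1 l.+1)).
  exact/staircase_maximal/ltnW.
rewrite card_imset ?card_staircase; last exact: can_inj (@grid_transposeK _ _).
exact/esym/maxn_idPr/ltnW.
Qed.

Theorem theorem1p9 (k l : nat) (hk : (1 <= k)%N) (hl : (1 <= l)%N) :
  sat_star_is k l (maxn k l).
Proof.
split=> [|F /strong_VW_saturatedE]; last exact: maximal_card_ge.
have [F [maxF cardF]] := exists_maximal_grid hk hl.
by exists F; split=> //; apply/strong_VW_saturatedE.
Qed.
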